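(* Let $\psi\in(-\pi,\pi]$ and $\tau>0$. Then for every $(a,w)\in D_c$ and every $s>0$, $(sa,sw)\in\Gamma_c(\psi;\tau)$ if and only if $s = \frac{1}{\tau}\tau_c(a,w)$ and $\operatorname{Arg}(w) = \psi$.
   Context: $\operatorname{Arg}(w)\in(-\pi,\pi]$ is the principal argument; $\arccos:[-1,1]\to[0,\pi]$. $D_c := \{(a,w)\in\mathbb{R}\times(\mathbb{C}\setminus\{0\}):\operatorname{Re}(w)<a<|w|\}$; $\tau_c(a,w) := \frac{1}{\sqrt{|w|^2-a^2}}[|\operatorname{Arg}(w)|-\arccos(a/|w|)]$. For $\Omega\neq0$ with $\tau\Omega-\psi\notin\pi\mathbb{Z}$: $a(\Omega,\psi;\tau) := -\Omega\cot(\tau\Omega-\psi)$, $\rho(\Omega,\psi;\tau) := -\Omega/\sin(\tau\Omega-\psi)$. $I_c(\psi) := (0,\psi)$ if $\psi\ge0$ and $(\psi,0)$ if $\psi\le0$. $\Gamma_c(\psi;\tau) := \{(a(\Omega,\psi;\tau),\,\rho(\Omega,\psi;\tau)e^{i\psi}) : \tau\Omega\in I_c(\psi)\}\subset\mathbb{R}\times\mathbb{C}$. *)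

From Stdlib Require Import Reals Lra.
From Coquelicot Require Import Coquelicot.
Open Scope R_scope.

(* Principal argument Arg(w) in (-PI, PI] of a nonzero complex number w,
   via the standard formula: Arg w = acos(Re w/|w|) if Im w >= 0,
   and -acos(Re w/|w|) if Im w < 0. Stdlib's acos maps [-1,1] onto [0,PI]. *)
Definition Arg (w : C) : R :=
  if Rle_dec 0 (Im w) then acos (Re w / Cmod w) else - acos (Re w / Cmod w).

Definition in_D_c (a : R) (w : C) : Prop :=
  w <> 0%C /\ Re w < a /\ a < Cmod w.

Definition tau_c (a : R) (w : C) : R :=
  / sqrt (Cmod w ^ 2 - a ^ 2) * (Rabs (Arg w) - acos (a / Cmod w)).

Definition a_fun (Om psi tau : R) : R :=
  - Om * (cos (tau * Om - psi) / sin (tau * Om - psi)).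

Definition rho_fun (Om psi tau : R) : R :=
  - Om / sin (tau * Om - psi).

Definition in_I_c (psi x : R) : Prop :=
  (0 <= psi /\ 0 < x < psi) \/ (psi <= 0 /\ psi < x < 0).

Definition cexp_i (psi : R) : C := (cos psi, sin psi).

(* For tau*Om in I_c(psi) with psi in (-PI,PI], Om <> 0 and
   tau*Om - psi is not in PI*Z, so a_fun and rho_fun are well defined there. *)
Definition in_Gamma_c (psi tau : R) (x : R) (z : C) : Prop :=
  exists Om : R, in_I_c psi (tau * Om) /\
    x = a_fun Om psi tau /\ z = (RtoC (rho_fun Om psi tau) * cexp_i psi)%C.

From Stdlib Require Import Reals Lra.
From Coquelicot Require Import Coquelicot.
Open Scope R_scope.

(* Substituting th := |psi| - tau |Om| turns the parametrisation of
   Gamma_c(psi; tau) over tau Om in I_c(psi) into one over th in (0, |psi|):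
   the point is (r cos th, r e^{i psi}) with r = Om' / sin th, Om' = (|psi| - th)/tau
   (lemma [in_Gamma_c_angle]).  A point (s a, s w) has this form iff, in polar
   coordinates w = |w| e^{i Arg w}, the modulus and argument match
   ([Arg_polar], [polar]): Arg w = psi, s |w| = r and a / |w| = cos th, i.e.
   th = arccos (a / |w|).  The remaining relation s |w| sin th = Om' is exactly
   s = tau_c(a,w) / tau, because sqrt (|w|^2 - a^2) = |w| sin (arccos (a/|w|))
   ([sqrt_sq_diff]).  Membership in D_c guarantees 0 < arccos (a/|w|) < |Arg w|
   ([D_c_angle]), which makes the angle admissible. *)

Lemma div_in_unit (m a : R) : 0 < m -> -m <= a <= m -> -1 <= a / m <= 1.
Proof.
  intros Hm Ha. assert (E : a / m * m = a) by (field; lra).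
  set (c := a / m) in *. split; nra.
Qed.

Lemma sqrt_sq_diff (m a : R) : 0 < m -> -m <= a <= m ->
  sqrt (m ^ 2 - a ^ 2) = m * sin (acos (a / m)).
Proof.
  intros Hm Ha. rewrite sin_acos by (apply div_in_unit; auto).
  replace (m ^ 2 - a ^ 2) with (m ^ 2 * (1 - (a / m)²)) by (unfold Rsqr; field; lra).
  rewrite sqrt_mult_alt by apply pow2_ge_0. rewrite sqrt_pow2 by lra. reflexivity.
Qed.

Lemma acos_lt (u v : R) : -1 <= u -> u < v -> v <= 1 -> acos v < acos u.
Proof.
  intros Hu Huv Hv.
  destruct (Rlt_le_dec (acos v) (acos u)) as [H | H]; [exact H | exfalso].
  pose proof (acos_bound u). pose proof (acos_bound v).
  pose proof (cos_decr_1 (acos u) (acos v) ltac:(lra) ltac:(lra) ltac:(lra) ltac:(lra) H) as Hc.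
  rewrite !cos_acos in Hc by lra. lra.
Qed.

Lemma Cmod_sq (x y : R) : Cmod (x, y) ^ 2 = x ^ 2 + y ^ 2.
Proof. unfold Cmod; simpl. apply pow2_sqrt. nra. Qed.

Lemma Re_div_Cmod_bound (w : C) : w <> 0%C -> -1 <= Re w / Cmod w <= 1.
Proof.
  intros Hw. apply div_in_unit; [now apply Cmod_gt_0|].
  apply Rabs_le_between, re_le_Cmod.
Qed.

Lemma Rabs_Arg (w : C) : Rabs (Arg w) = acos (Re w / Cmod w).
Proof.
  pose proof (acos_bound (Re w / Cmod w)).
  unfold Arg; destruct (Rle_dec 0 (Im w)).
  - apply Rabs_right; lra.
  - rewrite Rabs_Ropp. apply Rabs_right; lra.
Qed.

Lemma polar (w : C) : w <> 0%C -> w = (RtoC (Cmod w) * cexp_i (Arg w))%C.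
Proof.
  intros Hw. assert (Hm : 0 < Cmod w) by now apply Cmod_gt_0.
  pose proof (Re_div_Cmod_bound w Hw) as Hc.
  destruct w as [x y].
  assert (Hx : - Cmod (x, y) <= x <= Cmod (x, y)) by apply Rabs_le_between, (re_le_Cmod (x, y)).
  pose proof (sqrt_sq_diff _ _ Hm Hx) as Hy.
  rewrite Cmod_sq in Hy. replace (x ^ 2 + y ^ 2 - x ^ 2) with (y ^ 2) in Hy by ring.
  rewrite <- pow2_abs, sqrt_pow2 in Hy by apply Rabs_pos.
  unfold cexp_i, Cmult, Arg, Re, Im, RtoC; simpl.
  destruct (Rle_dec 0 y) as [Hy0 | Hy0].
  - rewrite Rabs_right in Hy by lra. rewrite cos_acos by exact Hc.
    f_equal; [field; lra | rewrite Hy at 1; ring].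
  - rewrite Rabs_left in Hy by lra. rewrite cos_neg, sin_neg, cos_acos by exact Hc.
    f_equal; [field; lra | lra].
Qed.

Lemma Arg_polar (r psi : R) : 0 < r -> -PI < psi <= PI ->
  Cmod (RtoC r * cexp_i psi)%C = r /\ Arg (RtoC r * cexp_i psi)%C = psi.
Proof.
  intros Hr Hpsi.
  replace (RtoC r * cexp_i psi)%C with (r * cos psi, r * sin psi)
    by (unfold cexp_i, Cmult, RtoC; simpl; f_equal; ring).
  assert (Hm : Cmod (r * cos psi, r * sin psi) = r).
  { unfold Cmod; cbn [fst snd].
    replace ((r * cos psi) ^ 2 + (r * sin psi) ^ 2) with (r ^ 2)
      by (rewrite <- (Rmult_1_r (r ^ 2)), <- (sin2_cos2 psi); unfold Rsqr; ring).
    apply sqrt_pow2; lra. }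
  split; [exact Hm|].
  unfold Arg, Re, Im; rewrite Hm; cbn [fst snd].
  replace (r * cos psi / r) with (cos psi) by (field; lra).
  destruct (Rle_dec 0 (r * sin psi)) as [Hs | Hs].
  - assert (0 <= psi).
    { destruct (Rle_dec 0 psi) as [|Hn]; [assumption|].
      pose proof (sin_lt_0_var psi ltac:(lra) ltac:(lra)). nra. }
    apply acos_cos; lra.
  - assert (psi < 0).
    { destruct (Rlt_le_dec psi 0) as [|Hn]; [assumption|].
      pose proof (sin_ge_0 psi Hn ltac:(lra)). nra. }
    rewrite <- cos_neg, acos_cos by lra. ring.
Qed.

Lemma Arg_scale (s : R) (w : C) : 0 < s -> Arg (RtoC s * w)%C = Arg w.
Proof.
  intros Hs.
  assert (Hm : Cmod (RtoC s * w)%C = s * Cmod w)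
    by (rewrite Cmod_mult, Cmod_R, Rabs_right by lra; reflexivity).
  assert (Hre : Re (RtoC s * w)%C = s * Re w) by (unfold Re, RtoC, Cmult; simpl; ring).
  assert (Him : Im (RtoC s * w)%C = s * Im w) by (unfold Im, RtoC, Cmult; simpl; ring).
  unfold Arg; rewrite Hm, Hre, Him.
  destruct (Req_dec (Cmod w) 0) as [H0 | H0].
  - rewrite H0, Rmult_0_r, !Rdiv_0_r.
    destruct (Rle_dec 0 (s * Im w)), (Rle_dec 0 (Im w)); nra.
  - replace (s * Re w / (s * Cmod w)) with (Re w / Cmod w) by (field; lra).
    destruct (Rle_dec 0 (s * Im w)), (Rle_dec 0 (Im w)); try reflexivity; nra.
Qed.

(* On D_c the angle arccos (a/|w|) lies strictly between 0 and |Arg w|: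
   the condition Re w < a < |w| reads cos |Arg w| < a/|w| < cos 0. *)
Lemma D_c_angle (a : R) (w : C) :
  in_D_c a w -> 0 < acos (a / Cmod w) < Rabs (Arg w).
Proof.
  intros [Hw [Hre Ha]].
  assert (Hm : 0 < Cmod w) by now apply Cmod_gt_0.
  pose proof (Re_div_Cmod_bound w Hw).
  assert (Re w / Cmod w < a / Cmod w) by (apply Rmult_lt_compat_r; [apply Rinv_0_lt_compat|]; lra).
  assert (a / Cmod w < 1).
  { apply (Rmult_lt_reg_r (Cmod w)); [exact Hm|].
    replace (a / Cmod w * Cmod w) with a by (field; lra). lra. }
  rewrite Rabs_Arg, <- acos_1. split; apply acos_lt; lra.
Qed.

Lemma a_rho_fun_angle (Om psi tau th : R) : tau * Om - psi = - th ->
  a_fun Om psi tau = Om * (cos th / sin th) /\ rho_fun Om psi tau = Om / sin th.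
Proof.
  intros E. unfold a_fun, rho_fun, Rdiv. rewrite E, cos_neg, sin_neg, Rinv_opp.
  split; ring.
Qed.

Lemma in_Gamma_c_angle (psi tau x : R) (z : C) : 0 < tau ->
  in_Gamma_c psi tau x z <->
  exists th, 0 < th < Rabs psi /\
    x = (Rabs psi - th) / tau * (cos th / sin th) /\
    z = (RtoC ((Rabs psi - th) / tau / sin th) * cexp_i psi)%C.
Proof.
  intros Htau. unfold in_Gamma_c, in_I_c.
  destruct (Rlt_le_dec 0 psi) as [Hpos | Hnpos].
  - (* psi > 0 : th = psi - tau Om with Om > 0 *)
    rewrite Rabs_right by lra. split.
    + intros (Om & [[_ HI] | [? _]] & Hx & Hz); [|lra].
      destruct (a_rho_fun_angle Om psi tau (psi - tau * Om) ltac:(ring)) as [Ea Er].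
      exists (psi - tau * Om).
      replace ((psi - (psi - tau * Om)) / tau) with Om by (field; lra).
      rewrite Hx, Hz, Ea, Er. split; [lra | split; reflexivity].
    + intros (th & Hth & Hx & Hz).
      set (Om := (psi - th) / tau) in *.
      assert (E : tau * Om = psi - th) by (unfold Om; field; lra).
      destruct (a_rho_fun_angle Om psi tau th ltac:(lra)) as [Ea Er].
      exists Om. rewrite Ea, Er. split; [left; lra | split; assumption].
  - (* psi <= 0 : th = tau Om - psi with Om < 0 *)
    rewrite Rabs_left1 by lra. split.
    + intros (Om & [[? [? ?]] | [_ HI]] & Hx & Hz); [lra|].
      exists (tau * Om - psi).
      replace ((- psi - (tau * Om - psi)) / tau) with (- Om) by (field; lra).
      rewrite Hx, Hz. unfold a_fun, rho_fun. split; [lra | split; reflexivity].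
    + intros (th & Hth & Hx & Hz).
      exists ((th + psi) / tau).
      assert (E : tau * ((th + psi) / tau) = th + psi) by (field; lra).
      replace ((- psi - th) / tau) with (- ((th + psi) / tau)) in Hx, Hz by (field; lra).
      unfold a_fun, rho_fun. rewrite E, Hx, Hz.
      replace (th + psi - psi) with th by ring.
      split; [right; lra | split; reflexivity].
Qed.

Lemma D_c_bound (a : R) (w : C) : in_D_c a w -> - Cmod w <= a <= Cmod w.
Proof.
  intros [_ [Hre Ha]].
  pose proof (proj1 (Rabs_le_between _ _) (re_le_Cmod w)). lra.
Qed.

Lemma tau_c_angle (a : R) (w : C) : in_D_c a w ->
  tau_c a w = (Rabs (Arg w) - acos (a / Cmod w)) / (Cmod w * sin (acos (a / Cmod w))).
Proof.
  intros HD.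
  assert (Hm : 0 < Cmod w) by (apply Cmod_gt_0, HD).
  unfold tau_c. rewrite sqrt_sq_diff by (exact Hm || exact (D_c_bound a w HD)).
  unfold Rdiv. apply Rmult_comm.
Qed.

(* The angle arccos (a/|w|) of a point of D_c lies in (0, PI), so its sine is positive. *)
Lemma D_c_sin_pos (a : R) (w : C) : in_D_c a w -> 0 < sin (acos (a / Cmod w)).
Proof.
  intros HD. pose proof (D_c_angle a w HD). pose proof (acos_bound (Re w / Cmod w)).
  rewrite Rabs_Arg in *. apply sin_gt_0; lra.
Qed.

Section ScaledPoint.

Variables (psi tau a s : R) (w : C).
Hypothesis Hpsi : -PI < psi <= PI.
Hypothesis Htau : 0 < tau.
Hypothesis HD : in_D_c a w.
Hypothesis Hs : 0 < s.

Lemma scaled_point_on_curve_inv (th : R) : 0 < th < Rabs psi ->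
  s * a = (Rabs psi - th) / tau * (cos th / sin th) ->
  (RtoC s * w)%C = (RtoC ((Rabs psi - th) / tau / sin th) * cexp_i psi)%C ->
  s = / tau * tau_c a w /\ Arg w = psi.
Proof.
  intros Hth Hx Hz.
  assert (Hm : 0 < Cmod w) by (apply Cmod_gt_0, HD).
  assert (Habs : Rabs psi <= PI) by (apply Rabs_le; lra).
  assert (Hsin : 0 < sin th) by (apply sin_gt_0; lra).
  rewrite (tau_c_angle a w HD).
  set (m := Cmod w) in *. set (Om := (Rabs psi - th) / tau) in *.
  assert (Hr : 0 < Om / sin th)
    by (apply Rdiv_lt_0_compat; [unfold Om; apply Rdiv_lt_0_compat|]; lra).
  destruct (Arg_polar _ _ Hr Hpsi) as [Hmod Harg].
  rewrite <- Hz, Cmod_mult, Cmod_R, Rabs_right in Hmod by lra. fold m in Hmod.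
  rewrite <- Hz, Arg_scale in Harg by exact Hs.
  assert (Hcos : a / m = cos th).
  { apply (Rmult_eq_reg_l (s * m)); [|nra].
    transitivity (s * a); [field; lra|].
    rewrite Hx, Hmod. field. lra. }
  assert (Eth : acos (a / m) = th) by (rewrite Hcos, acos_cos; lra).
  rewrite Eth, Harg. split; [|reflexivity].
  apply (Rmult_eq_reg_l (m * sin th)); [|nra].
  replace (m * sin th * s) with (Om / sin th * sin th) by (rewrite <- Hmod; ring).
  unfold Om. field. lra.
Qed.

Lemma scaled_point_on_curve : s = / tau * tau_c a w -> Arg w = psi ->
  let th0 := acos (a / Cmod w) in
  s * a = (Rabs psi - th0) / tau * (cos th0 / sin th0) /\
  (RtoC s * w)%C = (RtoC ((Rabs psi - th0) / tau / sin th0) * cexp_i psi)%C.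
Proof.
  intros Hs_eq Harg th0.
  assert (Hm : 0 < Cmod w) by (apply Cmod_gt_0, HD).
  pose proof (D_c_sin_pos a w HD) as Hsin0. fold th0 in Hsin0.
  rewrite (tau_c_angle a w HD) in Hs_eq. fold th0 in Hs_eq.
  set (m := Cmod w) in *.
  assert (HOm : (Rabs psi - th0) / tau = s * m * sin th0)
    by (rewrite Hs_eq, Harg; field; lra).
  assert (Hcos : cos th0 = a / m)
    by (apply cos_acos, div_in_unit; [exact Hm | exact (D_c_bound a w HD)]).
  rewrite HOm, Hcos. split; [field; lra|].
  rewrite (polar w) at 1 by apply HD. fold m. rewrite Harg.
  replace (s * m * sin th0 / sin th0) with (s * m) by (field; lra).
  rewrite Cmult_assoc, RtoC_mult. reflexivity.
Qed.

End ScaledPoint.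

Theorem mainTheorem18 (psi tau : R) (Hpsi : -PI < psi <= PI) (Htau : 0 < tau)
  (a : R) (w : C) (HD : in_D_c a w) (s : R) (Hs : 0 < s) :
  in_Gamma_c psi tau (s * a) (RtoC s * w)%C <->
  (s = / tau * tau_c a w /\ Arg w = psi).
Proof.
  rewrite (in_Gamma_c_angle _ _ _ _ Htau). split.
  - intros (th & Hth & Hx & Hz).
    exact (scaled_point_on_curve_inv psi tau a s w Hpsi Htau HD Hs th Hth Hx Hz).
  - intros [Hs_eq Harg].
    exists (acos (a / Cmod w)). split.
    + rewrite <- Harg. exact (D_c_angle a w HD).
    + exact (scaled_point_on_curve psi tau a s w Htau HD Hs_eq Harg).
Qed.
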